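(* Consider the discrete-time control system on $\mathrm{Aff}(2,\mathbb{R})$ given by $(x_{k+1},y_{k+1})=f_{u_k}(x_k,y_k)$, $u_k\in U$, where $f_u(x,y)=(h(u)x,\ a(x-1)+dy+g(u)x)$ with $a\in\mathbb{R}$, $d\in\mathbb{R}\setminus\{0\}$, $h:\mathbb{R}^m\to(0,\infty)$ and $g:\mathbb{R}^m\to\mathbb{R}$ smooth with $h(0)=1$, $g(0)=0$, and $U\subset\mathbb{R}^m$ a compact convex neighborhood of $0$. If $-a\,h'(0)\neq g'(0)(d-1)$ and $h'(0)\neq0$, then the system is accessible.
   Context: $\mathrm{Aff}(2,\mathbb{R})$ is $(0,\infty)\times\mathbb{R}$ with product $(x_1,y_1)\cdot(x_2,y_2)=(x_1x_2,\ y_2+x_2y_1)$. Solutions: $\varphi(0,p,u)=p$, $\varphi(k,p,u)=f_{u_{k-1}}\circ\cdots\circ f_{u_0}(p)$ for controls $u=(u_i)\in U^{\mathbb{N}_0}$. For a point $p$, $\mathcal{R}(p)=\bigcup_{k\in\mathbb{N}}\{\varphi(k,p,u)\}$ and $\mathcal{C}(p)=\bigcup_{k\in\mathbb{N}}\{q:\varphi(k,q,u)=p\text{ for some }u\}$. The system is forward accessible if $\mathrm{int}\,\mathcal{R}(p)\neq\emptyset$ for all $p$, backward accessible if $\mathrm{int}\,\mathcal{C}(p)\neq\emptyset$ for all $p$, and accessible if both hold. $h'(0)$, $g'(0)$ are the derivatives at $0$. *)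

From HB Require Import structures.
From mathcomp Require Import all_boot all_order all_algebra.
From mathcomp Require Import all_classical all_reals all_analysis.
Set Implicit Arguments. Unset Strict Implicit. Unset Printing Implicit Defensive.
Import Order.TTheory GRing.Theory Num.Theory.
Import numFieldNormedType.Exports.
Local Open Scope classical_set_scope.
Local Open Scope ring_scope.

Section Defs.
Variables (R : realType) (m : nat).
Local Notation V := 'rV[R]_m.

Fixpoint iterD (vs : seq V) (f : V -> R) : V -> R :=
  match vs with
  | [::] => f
  | v :: vs' => fun x => derive (iterD vs' f) x v
  end.

Definition smooth (f : V -> R) : Prop :=
  forall vs : seq V,
    continuous (iterD vs f) /\ (forall (x v : V), derivable (iterD vs f) x v).

(* the state space Aff(2,R) = (0,oo) x R, as a subset of R x R *)
Definition Aff2 : set (R * R) := [set p | 0 < p.1].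

Definition fsys (a d : R) (h g : V -> R) (u : V) (p : R * R) : R * R :=
  (h u * p.1, a * (p.1 - 1) + d * p.2 + g u * p.1).

Fixpoint phi (a d : R) (h g : V -> R) (k : nat) (p : R * R) (u : nat -> V)
  : R * R :=
  match k with
  | 0%N => p
  | k'.+1 => fsys a d h g (u k') (phi a d h g k' p u)
  end.

Definition admissible (U : set V) (u : nat -> V) : Prop := forall i, U (u i).

Definition reach_set a d h g (U : set V) (p : R * R) : set (R * R) :=
  [set q | exists k u, (0 < k)%N /\ admissible U u /\ q = phi a d h g k p u].

Definition ctrl_set a d h g (U : set V) (p : R * R) : set (R * R) :=
  [set q | Aff2 q /\
     exists k u, (0 < k)%N /\ admissible U u /\ phi a d h g k q u = p].

Definition forward_accessible a d h g U : Prop :=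
  forall p, Aff2 p -> interior (reach_set a d h g U p) !=set0.
Definition backward_accessible a d h g U : Prop :=
  forall p, Aff2 p -> interior (ctrl_set a d h g U p) !=set0.
Definition accessible a d h g U : Prop :=
  forward_accessible a d h g U /\ backward_accessible a d h g U.

End Defs.

From HB Require Import structures.
From mathcomp Require Import all_boot all_order all_algebra.
From mathcomp Require Import all_classical all_reals all_analysis.
From mathcomp Require Import ring lra.
Import Order.TTheory GRing.Theory Num.Theory.
Import numFieldNormedType.Exports.
Local Open Scope classical_set_scope.
Local Open Scope ring_scope.

(* Fix a direction [v] and put [H s := h (s v)], [G s := g (s v)].  Two steps with the
   controls [s v], [t v] send [p] to [(l p.1, c p + p.1 w)], where [c p] does not depend
   on the controls and [(l, w) = (H s H t, a H s + d G s + H s G t)] is the "gain".  As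
   [p.1 > 0] this is an affine bijection in [(l, w)], so it suffices that the gains fill a
   neighbourhood of [(1, a)].  The Jacobian of the gain at [(s, t) = 0] has determinant
   [- H'(0) (a H'(0) + (d - 1) G'(0))], nonzero for a suitable [v] by the hypotheses.
   Instead of a two-dimensional inverse function theorem, a local inverse [T] of [H]
   solves [H s H t = l] by [t = T (l / H s)], and the remaining scalar equation in [s],
   whose derivative at [0] is [a H'(0) + (d - 1) G'(0)], is solved by the intermediate
   value theorem, uniformly in [l]. *)

Section real_functions.
Context {R : realType}.

Lemma derivable1_continuous {f : R -> R} : (forall s, derivable f s 1) -> continuous f.
Proof. by move=> df s; apply: differentiable_continuous; apply/derivable1_diffP. Qed.

Lemma MVT_from0 (f df : R -> R) (b : R) :
  (forall s : R, is_derive s (1 : R) f (df s)) ->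
  exists2 c, `|c| <= `|b| & f b - f 0 = df c * b.
Proof.
move=> Df; have cf : continuous f by apply: derivable1_continuous => s; case: (Df s).
have [b0|b0] := leP 0 b.
  have [c + E] := MVT_segment b0 (fun s _ => Df s) (continuous_subspaceT cf).
  rewrite in_itv /= => /andP[c0 cb].
  by exists c; rewrite ?E ?subr0 // !ger0_norm // (le_trans c0 cb).
have [c + E] := MVT_segment (ltW b0) (fun s _ => Df s) (continuous_subspaceT cf).
rewrite in_itv /= => /andP[bc c0].
exists c; first by rewrite !ler0_norm ?lerN2 // ltW.
by rewrite -opprB E sub0r mulrN opprK.
Qed.

Lemma min_le_max_of_mulr_lt0 (A B w : R) :
  (A - w) * (B - w) < 0 -> Num.min A B <= w <= Num.max A B.
Proof.
move=> AB; rewrite ge_min le_max.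
by case: (lerP A w) => Aw; case: (lerP B w) => Bw //=; rewrite ?orbT //; nra.
Qed.

Lemma IVT_near (F : R -> R -> R) (l0 w0 a b : R) : a <= b ->
  (F l0 a - w0) * (F l0 b - w0) < 0 ->
  {for l0, continuous (F ^~ a)} -> {for l0, continuous (F ^~ b)} ->
  (\forall l \near l0, {within `[a, b], continuous (F l)}) ->
  \forall lw \near (l0, w0), exists2 s, s \in `[a, b] & F lw.1 s = lw.2.
Proof.
move=> ab sign_change Fa Fb Fab.
have cv : (fun lw => (F lw.1 a - lw.2) * (F lw.1 b - lw.2)) @ (l0, w0) -->
          (F l0 a - w0) * (F l0 b - w0).
  apply: cvgM; apply: cvgB; try exact: cvg_snd.
    exact: (@cvg_comp _ _ _ fst (F ^~ a) _ (nbhs l0) _ cvg_fst Fa).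
  exact: (@cvg_comp _ _ _ fst (F ^~ b) _ (nbhs l0) _ cvg_fst Fb).
near=> lw.
apply: IVT => //; last first.
  apply: min_le_max_of_mulr_lt0; near: lw; exact: cvgr_lt cv _ sign_change.
near: lw; exact: cvg_fst Fab.
Unshelve. all: by end_near.
Qed.

Lemma is_derive_sign_change (f : R -> R) (x c : R) :
  is_derive x 1 f c -> c != 0 ->
  \forall t \near 0^'+, (f (x + t) - f x) * (f (x - t) - f x) < 0.
Proof.
move=> [df Dc] c0.
have cv : (fun h => h^-1 * (f (h + x) - f x)) @ 0^' --> c.
  suff -> : (fun h => h^-1 * (f (h + x) - f x)) =
            (fun h => h^-1 *: ((f \o shift x) (h *: 1) - f x)) by rewrite -Dc; exact: df.
  by apply/funext => h /=; rewrite [h *: 1]mulr1.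
have : \forall h \near 0^', 0 < h^-1 * (f (h + x) - f x) * c.
  have c_norm_gt0 : 0 < `|c| by rewrite normr_gt0.
  near=> h.
  have : `|c - h^-1 * (f (h + x) - f x)| < `|c|.
    by near: h; exact: cvgr_dist_lt _ _ cv _ c_norm_gt0.
  rewrite ltr_distlC; case: (ltgtP c 0) c0 => // c_sgn _.
    by rewrite ltr0_norm // => /andP[_]; nra.
  by rewrite gtr0_norm // => /andP[+ _]; nra.
(* The two increments are [t] and [- t] times difference quotients of the sign of [c]. *)
move/nbhs_ballP => [e e_gt0 near0].
near=> t.
have t_gt0 : 0 < t by [].
have te : t < e by near: t; exact: nbhs_right_lt.
have := near0 t; have := near0 (- t).
rewrite -!ball_normE /= !sub0r !normrN gtr0_norm // oppr_eq0 gt_eqF //.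
move=> /(_ te isT) + /(_ te isT); rewrite invrN [x + t]addrC [x - t]addrC.
have : 0 < t^-1 by rewrite invr_gt0.
set A := f (t + x) - f x; set B := f (- t + x) - f x; set i := t^-1.
move=> i_gt0 hB hA; have Ac : 0 < A * c by nra.
have Bc : B * c < 0 by nra.
nra.
Unshelve. all: by end_near.
Qed.

Lemma near_inverse_of_derive_neq0 (H : R -> R) (x : R) :
  (forall s, derivable H s 1) -> {for x, continuous ('D_1 H)} -> 'D_1 H x != 0 ->
  exists T : R -> R, {near x, cancel H T}.
Proof.
move=> dH cH Hx0.
have : \forall s \near x, 'D_1 H s != 0 by exact: cvgr_neq0 _ cH Hx0.
move=> /nbhs_ballP[r r_gt0 D_neq0].
have inj : {in (ball x r : set R) &, injective H}.
  have inj_lt s1 s2 : ball x r s1 -> ball x r s2 -> s1 < s2 -> H s1 != H s2.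
    move=> s1r s2r s12.
    have [c c_in E] := MVT s12 (fun s _ => derivableP (dH s))
      (continuous_subspaceT (derivable1_continuous dH)).
    have c_r : ball x r c.
      move: s1r s2r c_in; rewrite -!ball_normE /= !ltr_distlC in_itv /=.
      move=> /andP[s1l _] /andP[_ s2r] /andP[s1c cs2].
      by rewrite (lt_trans s1l s1c) (lt_trans cs2 s2r).
    rewrite eq_sym -subr_eq0 E mulf_neq0 ?D_neq0 //.
    by rewrite subr_eq0 gt_eqF.
  move=> s1 s2; rewrite !inE => s1r s2r /eqP.
  by case: (ltgtP s1 s2) => [/(inj_lt _ _ s1r s2r)|/(inj_lt _ _ s2r s1r)|//];
    rewrite ?[H s2 == _]eq_sym => /negPf ->.
exists (pinv (ball x r : set R) H); apply/nbhs_ballP; exists r => // s xs.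
exact: pinvKV inj _ (mem_set xs).
Qed.
End real_functions.

Section directional_derivatives.
Context {R : realType} {m : nat}.
Local Notation V := 'rV[R]_m.

Lemma is_derive_along_line (f : V -> R) (x v : V) (t : R) :
  derivable f (t *: v + x) v ->
  is_derive t 1 (fun s => f (s *: v + x)) ('D_v f (t *: v + x)).
Proof.
move=> df.
have E : (fun h : R => h^-1 *: (((fun s => f (s *: v + x)) \o shift t) (h *: 1)
                                 - f (t *: v + x)))
   = (fun h => h^-1 *: ((f \o shift (t *: v + x)) (h *: v) - f (t *: v + x))).
  apply/funext => h /=.
  by rewrite [h *: 1]mulr1 scalerDl addrA.
by split; [rewrite /derivable E | rewrite /derive E].
Qed.

Lemma is_derive_scale (f : V -> R) (v : V) (s : R) :
  derivable f (s *: v) v -> is_derive s 1 (fun t => f (t *: v)) ('D_v f (s *: v)).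
Proof.
move=> df; have := @is_derive_along_line f 0 v s; rewrite addr0 => /(_ df).
by under eq_fun do rewrite addr0.
Qed.

Lemma rV_entry_le_norm (w : V) k : `|w 0 k| <= `|w|.
Proof.
rewrite -[`|w|]/(mx_norm w) mx_normrE.
exact: (le_bigmax _ (fun ij : 'I_1 * 'I_m => `|w ij.1 ij.2|) (0, k)).
Qed.

Lemma rV_norm_le_entrywise (x w : V) :
  (forall k, `|x 0 k| <= `|w 0 k|) -> `|x| <= `|w|.
Proof.
move=> xw; rewrite -[`|x|]/(mx_norm x) mx_normrE.
apply: bigmax_le => [|[i j] _] /=; first exact: normr_ge0.
by rewrite (ord1 i); apply: le_trans (xw j) (rV_entry_le_norm _ _).
Qed.

Local Notation e i := (delta_mx 0 i : V).

Lemma partials_increment_le (f : V -> R) (x w : V) (eps : R) :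
  (forall y v, derivable f y v) ->
  (forall y, `|y| <= `|w| -> forall i, `|'D_(e i) f x - 'D_(e i) f (y + x)| <= eps) ->
  `|f (w + x) - f x - \sum_i w 0 i * 'D_(e i) f x| <= m%:R * (`|w| * eps).
Proof.
move=> Df near_x.
(* A path from [0] to [w] along the coordinate axes. *)
pose z (k : nat) : V := \row_j (if (j < k)%N then w 0 j else 0).
have zS (k : 'I_m) : z k.+1 = w 0 k *: e k + z k.
  apply/rowP => j; rewrite !mxE /= ltnS leq_eqVlt.
  have [->|jk] := eqVneq j k; first by rewrite eqxx ltnn mulr1 addr0.
  by rewrite mulr0 add0r -[_ == _]/(j == k) (negbTE jk).
have telescope_z : f (w + x) - f x = \sum_(k < m) (f (z k.+1 + x) - f (z k + x)).
  rewrite -(big_mkord xpredT (fun k => f (z k.+1 + x) - f (z k + x))) telescope_sumr //.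
  have -> : z m = w by apply/rowP => j; rewrite mxE ltn_ord.
  have -> : z 0%N = 0 by apply/rowP => j; rewrite !mxE.
  by rewrite add0r.
have step (k : 'I_m) :
    `|f (z k.+1 + x) - f (z k + x) - w 0 k * 'D_(e k) f x| <= `|w| * eps.
  have [c cw E] := @MVT_from0 _ _ _ (w 0 k)
    (fun s => is_derive_along_line f (z k + x) (e k) s (Df _ _)).
  rewrite /= scale0r add0r in E.
  rewrite zS -(addrA (_ *: _)) E mulrC -mulrBr normrM distrC.
  apply: ler_pM => //; first exact: rV_entry_le_norm.
  rewrite addrA; apply: near_x; apply: rV_norm_le_entrywise => j; rewrite !mxE /=.
  have [->|jk] := eqVneq j k; last first.
    by rewrite mulr0 add0r; case: ifP; rewrite ?normr0.
  by rewrite ltnn mulr1 addr0.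
rewrite telescope_z -sumrB; apply: le_trans (ler_norm_sum _ _ _) _.
by apply: le_trans (ler_sum _ (fun k _ => step k)) _; rewrite sumr_const card_ord mulr_natl.
Qed.

Lemma continuous_partials_differentiable (f : V -> R) (x : V) :
  (forall y v, derivable f y v) -> (forall v, {for x, continuous ('D_v f)}) ->
  differentiable f x.
Proof.
move=> Df Cf.
pose L (w : V) := \sum_i w 0 i * 'D_(e i) f x.
have linL : linear L.
  move=> k y z; rewrite /L scaler_sumr -big_split /=; apply: eq_bigr => i _.
  by rewrite !mxE /GRing.scale /= mulrDl mulrA.
pose LL : {linear V -> R} := HB.pack L (GRing.isLinear.Build _ _ _ _ L linL).
have cL : continuous L.
  rewrite (_ : L = \sum_i (fun w : V => w 0 i * 'D_(e i) f x)); last first.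
    by apply/funext => w; rewrite fct_sumE.
  apply: (big_ind (fun g : V -> R => continuous g)) => [|g1 g2 c1 c2 y|i _ y].
  - exact: cst_continuous.
  - exact: continuousD (c1 y) (c2 y).
  - apply: cvgMr_tmp; [exact: nbhs_filter | exact: (@coord_continuous R 1 m 0 i y)].
have oL : f \o shift x = cst (f x) + (LL : V -> R) +o_ (0 : V) id.
  apply/eqaddoP => _/posnumP[eps].
  pose eps' := eps%:num / (m%:R + 1).
  have eps'_gt0 : 0 < eps' by rewrite divr_gt0 // ltr_wpDl.
  have : \forall z \near x, forall i, `|'D_(e i) f x - 'D_(e i) f z| <= eps'.
    apply: (@filter_forall _ 'I_m
      (fun i z => `|'D_(e i) f x - 'D_(e i) f z| <= eps') (nbhs x) _) => i.
    exact: cvgr_dist_le (Cf (e i)) _ eps'_gt0.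
  move/nbhs_ballP => [r r_gt0 near_x].
  apply/nbhs_ballP; exists r => // w; rewrite -ball_normE /= sub0r normrN => wr.
  rewrite !fctE /= opprD addrA.
  apply: le_trans (@partials_increment_le f x w eps' Df _) _.
    move=> y yw; apply: near_x; rewrite -ball_normE /= opprD addrCA subrr addr0.
    by rewrite normrN (le_lt_trans yw).
  rewrite mulrCA [_ * `|w|]mulrC ler_wpM2l // /eps' mulrA ler_pdivrMr ?ltr_wpDl //.
  by rewrite mulrC ler_pM2l // lerDl.
have cLL : continuous (LL : V -> R) by move=> y; exact: cL y.
have dfL : 'd f x = LL :> (V -> R) := diff_unique cLL oL.
by apply/diff_locallyP; rewrite dfL; split.
Qed.

Lemma smooth_differentiable (f : V -> R) (x : V) : smooth f -> differentiable f x.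
Proof.
move=> sf; apply: continuous_partials_differentiable => [|v]; first exact: (sf [::]).2.
exact: (sf [:: v]).1.
Qed.

Lemma smooth_along_line (f : V -> R) (v : V) : smooth f ->
  [/\ forall s : R, derivable (fun s : R => f (s *: v)) s 1,
      continuous ('D_1 (fun s : R => f (s *: v)))
    & 'D_1 (fun s : R => f (s *: v)) 0 = 'D_v f 0].
Proof.
move=> sf.
have Df (s : R) : is_derive s (1 : R) (fun s : R => f (s *: v)) ('D_v f (s *: v)).
  by apply: is_derive_scale; exact: (sf [::]).2.
have D1f : 'D_1 (fun s : R => f (s *: v)) = fun s => 'D_v f (s *: v).
  by apply/funext => s; exact: derive_val.
split.
- by move=> s; case: (Df s).
- by rewrite D1f => s; exact: continuous_comp (@scalel_continuous R _ v s) ((sf [:: v]).1 _).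
- by rewrite -[in RHS](scale0r v); exact: derive_val.
Qed.
End directional_derivatives.

Section two_step_map.
Context {R : realType}.
Variables (H G T : R -> R) (a d : R).
Hypotheses (dH : forall s, derivable H s 1) (dG : forall s, derivable G s 1).
Hypotheses (H_gt0 : forall s, 0 < H s) (H0 : H 0 = 1) (G0 : G 0 = 0).
Hypotheses (TK : {near (1 : R), cancel T H}) (TC : {near (1 : R), continuous T}).
Hypotheses (T1 : T 1 = 0) (TD : is_derive (1 : R) (1 : R) T ('D_1 H 0)^-1).
Hypothesis DH0_neq0 : 'D_1 H 0 != 0.
Hypothesis c_neq0 : a * 'D_1 H 0 + (d - 1) * 'D_1 G 0 != 0.

(* [t = T (l / H s)] solves the first equation [H s * H t = l]; what is left is the
   scalar equation [Phi l s = w]. *)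
Let Phi l s := a * H s + d * G s + H s * G (T (l / H s)).

Let H_continuous : continuous H := derivable1_continuous dH.
Let G_continuous : continuous G := derivable1_continuous dG.

Lemma Phi_derive0 :
  is_derive (0 : R) (1 : R) (Phi 1) (a * 'D_1 H 0 + (d - 1) * 'D_1 G 0).
Proof.
have H0_neq0 : H 0 != 0 by rewrite H0 oner_eq0.
have DHV : is_derive (0 : R) (1 : R) (fun s => (H s)^-1) (- (H 0) ^- 2 *: 'D_1 H 0) :=
  is_deriveV H0_neq0 (derivableP (dH 0)).
have TD' : is_derive ((fun s => (H s)^-1) 0) (1 : R) T ('D_1 H 0)^-1 by rewrite /= H0 invr1.
have DTHV := @is_derive1_comp R T (fun s => (H s)^-1) 0 _ _ TD' DHV.
have DG' : is_derive ((T \o (fun s => (H s)^-1)) 0) (1 : R) G ('D_1 G 0).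
  by rewrite /= H0 invr1 T1; exact: derivableP (dG 0).
have DGTHV := @is_derive1_comp R G (T \o (fun s => (H s)^-1)) 0 _ _ DG' DTHV.
have D := is_deriveD (is_deriveD (is_deriveZ a (derivableP (dH 0)))
                                 (is_deriveZ d (derivableP (dG 0))))
                     (is_deriveM (derivableP (dH 0)) DGTHV).
have -> : Phi 1 = a \*: H + d \*: G + H * (G \o (T \o (fun s => (H s)^-1))).
  by apply/funext => s; rewrite /Phi /= div1r.
case: D => D DE; split => //; rewrite DE /= H0 invr1 T1 G0 expr1n invr1.
have scaleE (x y : R) : x *: y = x * y by [].
rewrite !scaleE mulN1r mulrN mulVf // mulrN1 mul1r mul0r addr0.
ring.
Qed.

Lemma Phi_continuous l s : {for l / H s, continuous T} ->
  {for l, continuous (Phi ^~ s)} /\ {for s, continuous (Phi l)}.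
Proof.
move=> cT.
have GTk (k : R -> R) x : k x = l / H s -> {for x, continuous k} ->
    {for x, continuous (fun y => G (T (k y)))}.
  move=> kx ck; have cT' : {for k x, continuous T} by rewrite kx.
  exact: continuous_comp (continuous_comp ck cT') (G_continuous _).
have Hs_neq0 : H s != 0 by rewrite gt_eqF.
split; rewrite /Phi.
  apply: cvgD; first exact: cvg_cst.
  by apply: cvgMl_tmp; apply: (GTk (fun l' => l' / H s)) => //; apply: cvgMr_tmp.
apply: cvgD; first apply: cvgD.
- exact: cvgMl_tmp (H_continuous s).
- exact: cvgMl_tmp (G_continuous s).
apply: cvgM (H_continuous s) _; apply: (GTk (fun s' => l / H s')) => //.
apply: cvgMl_tmp.
exact: continuousV Hs_neq0 (H_continuous s).
Qed.

Lemma Phi_sign_change :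
  \forall e \near 0^'+, (Phi 1 (- e) - a) * (Phi 1 e - a) < 0.
Proof.
have Phi10 : Phi 1 0 = a by rewrite /Phi H0 G0 divr1 T1 G0 !mulr0 mulr1 !addr0.
have := is_derive_sign_change _ _ _ Phi_derive0 c_neq0; apply: filterS => e.
by rewrite add0r sub0r Phi10 mulrC.
Qed.

Lemma quotient_region (P : set R) : (\forall s \near 0, P s) ->
  exists2 rho, 0 < rho & forall l s, `|l - 1| < rho -> `|s| < rho ->
    [/\ {for l / H s, continuous T}, H (T (l / H s)) = l / H s & P (T (l / H s))].
Proof.
move=> P0.
have quot_cvg : (fun ls : R * R => ls.1 / H ls.2) @ ((1, 0) : R * R) --> (1 : R).
  have : (fun ls : R * R => ls.1 / H ls.2) @ ((1, 0) : R * R) --> (1 / H 0 : R).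
    apply: cvgM; first exact: cvg_fst.
    apply: cvgV; first by rewrite H0 oner_eq0.
    exact: (@cvg_comp _ _ _ snd H _ (nbhs 0) _ cvg_snd (H_continuous 0)).
  by rewrite H0 divr1.
have : \forall y \near (1 : R), [/\ {for y, continuous T}, H (T y) = y & P (T y)].
  near=> y; split; near: y; [exact: TC | exact: TK |].
  by apply: (nbhs_singleton TC); rewrite T1.
move=> /quot_cvg /nbhs_ballP[rho rho_gt0 good]; exists rho => // l s l_rho s_rho.
apply: (good (l, s)).
by split; rewrite -ball_normE /= ?sub0r ?normrN // distrC.
Unshelve. all: by end_near.
Qed.

Lemma two_step_onto_of_inverse (P : set R) : (\forall s \near 0, P s) ->
  nbhs ((1, a) : R * R) [set lw | exists s t, [/\ P s, P t,
    H s * H t = lw.1 & a * H s + d * G s + H s * G t = lw.2]].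
Proof.
move=> P0; have [rho rho_gt0 good] := quotient_region _ P0.
move: P0 => /nbhs_ballP[r r_gt0 rP].
have near_rho : \forall l \near (1 : R), `|l - 1| < rho.
  by apply/nbhs_ballP; exists rho => // y; rewrite -ball_normE /= distrC.
near (0 : R)^'+ => e.
have e_gt0 : 0 < e by [].
have e_small : e < Num.min rho r.
  by near: e; apply: nbhs_right_lt; rewrite lt_min rho_gt0 r_gt0.
move: e_small; rewrite lt_min => /andP[e_rho e_r].
have sign : (Phi 1 (- e) - a) * (Phi 1 e - a) < 0 by near: e; exact: Phi_sign_change.
have norm_le_e s : s \in `[- e, e] -> `|s| <= e by rewrite in_itv /= -ler_norml.
have ends s : `|s| <= e -> {for 1, continuous (Phi ^~ s)}.
  move=> se; have [|cT _ _] := good 1 s _ (le_lt_trans se e_rho).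
    by rewrite subrr normr0.
  exact: (Phi_continuous _ _ cT).1.
have IVT_Phi : \forall lw \near ((1, a) : R * R),
    exists2 s, s \in `[- e, e] & Phi lw.1 s = lw.2.
  apply: IVT_near sign _ _ _; first lra.
  - by apply: ends; rewrite normrN gtr0_norm.
  - by apply: ends; rewrite gtr0_norm.
  near=> l; apply: continuous_in_subspaceT => s; rewrite inE => s_in.
  have [|cT _ _] := good l s _ (le_lt_trans (norm_le_e s s_in) e_rho).
    by near: l; exact: near_rho.
  exact: (Phi_continuous _ _ cT).2.
near=> lw.
have [s s_in Phis] : exists2 s, s \in `[- e, e] & Phi lw.1 s = lw.2.
  by near: lw; exact: IVT_Phi.
have l_rho : `|lw.1 - 1| < rho by near: lw; exact: cvg_fst near_rho.
have [_ HT PT] := good _ _ l_rho (le_lt_trans (norm_le_e s s_in) e_rho).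
exists s, (T (lw.1 / H s)); split => //.
- by apply: rP; rewrite -ball_normE /= sub0r normrN (le_lt_trans (norm_le_e s s_in)).
- by rewrite HT mulrC divfK ?gt_eqF.
Unshelve. all: by end_near.
Qed.

End two_step_map.

Lemma two_step_onto {R : realType} {H G : R -> R} {a d : R} {P : set R} :
  (forall s, derivable H s 1) -> (forall s, derivable G s 1) ->
  {for 0, continuous ('D_1 H)} -> (forall s, 0 < H s) -> H 0 = 1 -> G 0 = 0 ->
  'D_1 H 0 != 0 -> a * 'D_1 H 0 + (d - 1) * 'D_1 G 0 != 0 -> (\forall s \near 0, P s) ->
  nbhs ((1, a) : R * R) [set lw | exists s t, [/\ P s, P t,
    H s * H t = lw.1 & a * H s + d * G s + H s * G t = lw.2]].
Proof.
move=> dH dG cH H_gt0 H0 G0 DH0 c_neq0.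
have [T HK] := near_inverse_of_derive_neq0 _ _ dH cH DH0.
have H_cont : {near 0, continuous H} by near=> s; exact: derivable1_continuous.
have [TC TK] := near_can_continuousAcan_sym HK H_cont.
have TD := is_derive_inverse HK H_cont (derivableP (dH 0)) DH0.
rewrite H0 in TC TK TD.
have T1 : T 1 = 0 by rewrite -H0; exact: nbhs_singleton HK.
exact: two_step_onto_of_inverse.
Unshelve. all: by end_near.
Qed.

Lemma exists_common_nonroot (U W : zmodType) (A B : U -> W) :
  {morph A : x y / x + y} -> {morph B : x y / x + y} ->
  (exists v, A v != 0) -> (exists v, B v != 0) -> exists v, A v != 0 /\ B v != 0.
Proof.
move=> AD BD [v1 Av1] [v2 Bv2].
have [Bv1|Bv1] := eqVneq (B v1) 0; last by exists v1.
have [Av2|Av2] := eqVneq (A v2) 0; last by exists v2.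
by exists (v1 + v2); rewrite AD BD Bv1 Av2 addr0 add0r.
Qed.

Lemma exists_direction {U : zmodType} {R : pzRingType} {A B : U -> R} {a d : R} :
  {morph A : x y / x + y} -> {morph B : x y / x + y} ->
  (fun v => - a * A v) <> (fun v => (d - 1) * B v) -> (fun v => A v) <> (fun _ => 0) ->
  exists v, A v != 0 /\ a * A v + (d - 1) * B v != 0.
Proof.
move=> AD BD dir_neq A_neq0; apply: exists_common_nonroot => //.
- by move=> x y; rewrite AD BD mulrDr mulrDr addrACA.
- apply: contrapT => A0; apply: A_neq0; apply/funext => w.
  by apply/eqP/negPn/negP => Aw; apply: A0; exists w.
apply: contrapT => c0; apply: dir_neq; apply/funext => w.
apply/eqP; rewrite -subr_eq0 mulNr -opprD oppr_eq0.
by apply/negPn/negP => cw; apply: c0; exists w.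
Qed.

Section two_step_dynamics.
Context {R : realType} {m : nat}.
Variables (a d : R) (h g : 'rV[R]_m -> R) (U : set 'rV[R]_m).

Lemma phi_two_steps (p : R * R) (u : nat -> 'rV[R]_m) :
  phi a d h g 2 p u =
    (h (u 1%N) * h (u 0%N) * p.1,
     - a + d * (a * (p.1 - 1) + d * p.2)
       + p.1 * (a * h (u 0%N) + d * g (u 0%N) + h (u 0%N) * g (u 1%N))).
Proof. by rewrite /= /fsys /=; congr pair; ring. Qed.

(* By [phi_two_steps], two steps from [p] with controls of gain [(l, w)] lead to
   [(l * p.1, c p + p.1 * w)], where [c p] does not depend on the controls. *)
Definition two_step_gains : set (R * R) :=
  [set (h (u 1%N) * h (u 0%N), a * h (u 0%N) + d * g (u 0%N) + h (u 0%N) * g (u 1%N))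
    | u in admissible U].

Hypothesis gains_nbhs : nbhs ((1, a) : R * R) two_step_gains.

Lemma forward_accessible_of_gains : forward_accessible a d h g U.
Proof.
move=> [x y] /= x_gt0; have x_neq0 : x != 0 by rewrite gt_eqF.
pose c := - a + d * (a * (x - 1) + d * y).
exists (x, c + a * x).
have : (q.1 / x, (q.2 - c) / x) @[q --> ((x, c + a * x) : R * R)] --> ((1, a) : R * R).
  suff : (q.1 / x, (q.2 - c) / x) @[q --> ((x, c + a * x) : R * R)] -->
         ((x / x, (c + a * x - c) / x) : R * R).
    by rewrite divff // [c + _]addrC addrK mulfK.
  apply: (@cvg_pair _ _ _ _ (nbhs (x / x)) (nbhs ((c + a * x - c) / x))).
    by apply: cvgMr_tmp; exact: cvg_fst.
  by apply: cvgMr_tmp; apply: cvgB; [exact: cvg_snd | exact: cvg_cst].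
move=> /(_ _ gains_nbhs) near_gains; near=> q.
have [u u_adm [l_eq w_eq]] : two_step_gains (q.1 / x, (q.2 - c) / x) by near: q.
exists 2%N, u; do 2!split => //.
rewrite phi_two_steps /= l_eq w_eq divfK // [x * _]mulrC divfK // addrC subrK.
exact: surjective_pairing.
Unshelve. all: by end_near.
Qed.

Lemma backward_accessible_of_gains : d != 0 -> backward_accessible a d h g U.
Proof.
move=> d_neq0 [X Y] /= X_gt0; have X_neq0 : X != 0 by rewrite gt_eqF.
pose c (q : R * R) := - a + d * (a * (q.1 - 1) + d * q.2).
pose q0 : R * R := (X, (Y - a * X + a - d * a * (X - 1)) / (d * d)).
have c_q0 : c q0 = Y - a * X by rewrite /c /=; field.
exists q0.
have : (X / q.1, (Y - c q) / q.1) @[q --> q0] --> ((1, a) : R * R).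
  suff : (X / q.1, (Y - c q) / q.1) @[q --> q0] --> ((X / X, (Y - c q0) / X) : R * R).
    by rewrite divff // c_q0 opprB addrCA subrr addr0 mulfK.
  have inv_cvg : (q.1)^-1 @[q --> q0] --> X^-1 by apply: cvgV => //; exact: cvg_fst.
  apply: (@cvg_pair _ _ _ _ (nbhs (X / X)) (nbhs ((Y - c q0) / X))).
    by apply: cvgMl_tmp.
  apply: cvgM inv_cvg; apply: cvgB; first exact: cvg_cst.
  apply: cvgD; first exact: cvg_cst.
  apply: cvgMl_tmp; apply: cvgD; apply: cvgMl_tmp; last exact: cvg_snd.
  by apply: cvgB; [exact: cvg_fst | exact: cvg_cst].
move=> /(_ _ gains_nbhs) near_gains; near=> q.
have q1_gt0 : 0 < q.1 by near: q; exact: cvgr_gt _ cvg_fst _ X_gt0.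
have [u u_adm [l_eq w_eq]] : two_step_gains (X / q.1, (Y - c q) / q.1) by near: q.
split => //; exists 2%N, u; do 2!split => //.
rewrite phi_two_steps l_eq w_eq divfK ?gt_eqF // [q.1 * _]mulrC divfK ?gt_eqF //.
by rewrite -/(c q) addrC subrK.
Unshelve. all: by end_near.
Qed.
End two_step_dynamics.

Theorem proposition3p6 (R : realType) (m : nat) (a d : R)
  (h g : 'rV[R]_m -> R) (U : set 'rV[R]_m) :
  d != 0 ->
  (forall u, 0 < h u) ->
  smooth h -> smooth g ->
  h 0 = 1 -> g 0 = 0 ->
  compact U -> convex_set U -> nbhs (0 : 'rV[R]_m) U ->
  (fun v => - a * 'd h 0 v) <> (fun v => (d - 1) * 'd g 0 v) ->
  (fun v => 'd h 0 v) <> (fun _ => 0) ->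
  accessible a d h g U.
Proof.
move=> d_neq0 h_gt0 sh sg h0 g0 _ _ U0 dir_neq dh_neq0.
have [v [hv cv]] := exists_direction (linearD _) (linearD _) dir_neq dh_neq0.
rewrite -!(deriveE _ (smooth_differentiable h 0 sh)) in hv cv.
rewrite -(deriveE _ (smooth_differentiable g 0 sg)) in cv.
have [dH cH DH0] := smooth_along_line h v sh.
have [dG _ DG0] := smooth_along_line g v sg.
have U_near : \forall s \near 0, U (s *: v).
  by apply: (@scalel_continuous R _ v 0); rewrite scale0r.
have gains : nbhs ((1, a) : R * R) (two_step_gains a d h g U).
  apply: filterS (two_step_onto (a := a) (d := d) dH dG (cH 0) (fun s => h_gt0 _)
    _ _ _ _ U_near); rewrite ?DH0 ?DG0 ?scale0r // => -[l w] [s [t [Us Ut Hst Gst]]].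
  exists (fun i => if i == 0%N then s *: v else t *: v); first by case.
  by rewrite /= mulrC Hst Gst.
split; [exact: forward_accessible_of_gains | exact: backward_accessible_of_gains].
Qed.
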